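(* Let $\mathcal C$ and $\mathcal D$ be categories and $F\colon\mathcal C\to\mathcal D$ a functor. (1) If $\mathcal C$ has AP and $F$ is essentially wide and absorbing, then $\mathcal D$ has AP. (2) If $\mathcal C$ has CAP and $F$ is cofinal and absorbing, then $\mathcal D$ has CAP. (3) If $\mathcal C$ has WAP and $F$ is cofinal and weakly absorbing, then $\mathcal D$ has WAP. In particular, if $F$ is wide and star-surjective, then each of AP, CAP and WAP for $\mathcal C$ implies the same property for $\mathcal D$.
   Context: In a category, an object $A$ is an amalgamation base if for all morphisms $\alpha_1\colon A\to B$, $\alpha_2\colon A\to C$ there are an object $D$ and morphisms $\beta_1\colon B\to D$, $\beta_2\colon C\to D$ with $\beta_1\alpha_1=\beta_2\alpha_2$. AP: every object is an amalgamation base. CAP: every object $A_0$ has a morphism into an amalgamation base. WAP: every object $A_0$ has a morphism $i\colon A_0\to A$ that is amalgamable, i.e. for all $\alpha_1\colon A\to B$, $\alpha_2\colon A\to C$ there are $\beta_1\colon B\to D$, $\beta_2\colon C\to D$ with $\beta_1\alpha_1 i=\beta_2\alpha_2 i$. A functor $F\colon\mathcal C\to\mathcal D$ is: wide if every $\mathcal D$-object equals $F(X')$ for some $\mathcal C$-object $X'$; essentially wide if every $\mathcal D$-object is isomorphic to some $F(X')$; cofinal if for every $\mathcal D$-object $X$ there are a $\mathcal C$-object $X'$ and a $\mathcal D$-morphism $X\to F(X')$; star-surjective if for every $\mathcal C$-object $X'$ and $\mathcal D$-morphism $f\colon F(X')\to Y$ there is a $\mathcal C$-morphism $f'\colon X'\to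 Y'$ with $F(f')=f$; absorbing if for every $\mathcal C$-object $X'$ and $\mathcal D$-morphism $f\colon F(X')\to Y$ there are a $\mathcal C$-morphism $f'\colon X'\to Y'$ and a $\mathcal D$-morphism $g\colon Y\to F(Y')$ with $F(f')=g\circ f$; weakly absorbing if for every $\mathcal C$-object $X'$ there is a $\mathcal D$-morphism $e\colon F(X')\to X$ such that for every $\mathcal D$-morphism $f\colon X\to Y$ there are a $\mathcal C$-morphism $f'\colon X'\to Y'$ and a $\mathcal D$-morphism $g\colon Y\to F(Y')$ with $F(f')=g\circ f\circ e$. *)

Record Category := {
  Ob : Type;
  Hom : Ob -> Ob -> Type;
  idm : forall a : Ob, Hom a a;
  comp : forall a b c : Ob, Hom b c -> Hom a b -> Hom a c;
  comp_id_l : forall a b (f : Hom a b), comp a b b (idm b) f = f;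
  comp_id_r : forall a b (f : Hom a b), comp a a b f (idm a) = f;
  comp_assoc : forall a b c d (f : Hom a b) (g : Hom b c) (h : Hom c d),
      comp a c d h (comp a b c g f) = comp a b d (comp b c d h g) f
}.

Arguments Hom {C} : rename.
Arguments idm {C} : rename.
Arguments comp {C} {a b c} : rename.

Notation "g ∘ f" := (comp g f) (at level 40, left associativity).

Record Functor (C D : Category) := {
  fobj : Ob C -> Ob D;
  fmap : forall a b : Ob C, Hom a b -> Hom (fobj a) (fobj b);
  fmap_id : forall a, fmap a a (idm a) = idm (fobj a);
  fmap_comp : forall a b c (f : Hom a b) (g : Hom b c),
      fmap a c (g ∘ f) = fmap b c g ∘ fmap a b f
}.

Arguments fobj {C D} F : rename.
Arguments fmap {C D} F {a b} : rename.

Section Props.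
Variable C : Category.

Definition amalgamation_base (A : Ob C) : Prop :=
  forall (B Cc : Ob C) (a1 : Hom A B) (a2 : Hom A Cc),
    exists (D : Ob C) (b1 : Hom B D) (b2 : Hom Cc D), b1 ∘ a1 = b2 ∘ a2.

Definition AP : Prop := forall A : Ob C, amalgamation_base A.

Definition CAP : Prop :=
  forall A0 : Ob C, exists (A : Ob C) (_ : Hom A0 A), amalgamation_base A.

Definition amalgamable {A0 A : Ob C} (i : Hom A0 A) : Prop :=
  forall (B Cc : Ob C) (a1 : Hom A B) (a2 : Hom A Cc),
    exists (D : Ob C) (b1 : Hom B D) (b2 : Hom Cc D),
      b1 ∘ a1 ∘ i = b2 ∘ a2 ∘ i.

Definition WAP : Prop :=
  forall A0 : Ob C, exists (A : Ob C) (i : Hom A0 A), amalgamable i.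

Definition is_iso {a b : Ob C} (f : Hom a b) : Prop :=
  exists g : Hom b a, g ∘ f = idm a /\ f ∘ g = idm b.

Definition isomorphic (a b : Ob C) : Prop :=
  exists f : Hom a b, is_iso f.
End Props.

Arguments amalgamable {C A0 A} i.
Arguments is_iso {C a b} f.

Section FunctorProps.
Variables C D : Category.
Variable F : Functor C D.

Definition wide : Prop := forall X : Ob D, exists X' : Ob C, fobj F X' = X.

Definition essentially_wide : Prop :=
  forall X : Ob D, exists X' : Ob C, isomorphic D X (fobj F X').

Definition cofinal : Prop :=
  forall X : Ob D, exists (X' : Ob C) (_ : Hom X (fobj F X')), True.

(* F(f') = f, where the codomain F(Y') of F(f') is identified with Y via p *)
Definition star_surjective : Prop :=
  forall (X' : Ob C) (Y : Ob D) (f : Hom (fobj F X') Y),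
    exists (Y' : Ob C) (f' : Hom X' Y') (p : fobj F Y' = Y),
      eq_rect (fobj F Y') (fun Z => Hom (fobj F X') Z) (fmap F f') Y p = f.

Definition absorbing : Prop :=
  forall (X' : Ob C) (Y : Ob D) (f : Hom (fobj F X') Y),
    exists (Y' : Ob C) (f' : Hom X' Y') (g : Hom Y (fobj F Y')),
      fmap F f' = g ∘ f.

Definition weakly_absorbing : Prop :=
  forall X' : Ob C, exists (X : Ob D) (e : Hom (fobj F X') X),
    forall (Y : Ob D) (f : Hom X Y),
      exists (Y' : Ob C) (f' : Hom X' Y') (g : Hom Y (fobj F Y')),
        fmap F f' = g ∘ f ∘ e.
End FunctorProps.

Arguments wide {C D} F.
Arguments essentially_wide {C D} F.
Arguments cofinal {C D} F.
Arguments star_surjective {C D} F.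
Arguments absorbing {C D} F.
Arguments weakly_absorbing {C D} F.

(* An amalgamation problem in D over F(A) is pulled back into C: absorption
   turns each leg out of F(A) into the image of a leg out of A, up to a further
   morphism, C amalgamates the resulting span, and F carries the amalgamating
   square back to D.  Cofinality supplies an object F(A) above a given object
   of D, essential wideness reaches an arbitrary object as a retract of some
   F(A), and a wide star-surjective functor has all of these properties. *)


Section Amalgamation.
Variable C : Category.

Lemma amalgamation_baseE (A : Ob C) :
  amalgamation_base C A <-> amalgamable (idm A).
Proof.
  split; intros HA B Cc a1 a2; destruct (HA B Cc a1 a2) as [D [b1 [b2 Hb]]];
    exists D, b1, b2; [rewrite !comp_id_r | rewrite !comp_id_r in Hb]; exact Hb.
Qed.

Lemma amalgamable_comp_r (A0 A1 A : Ob C) (u : Hom A0 A1) (i : Hom A1 A) :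
  amalgamable i -> amalgamable (i ∘ u).
Proof.
  intros Hi B Cc a1 a2. destruct (Hi B Cc a1 a2) as [D [b1 [b2 Hb]]].
  exists D, b1, b2. rewrite !comp_assoc, Hb. reflexivity.
Qed.

Lemma amalgamable_comp_l (A0 A A' : Ob C) (i : Hom A0 A) (k : Hom A A') :
  amalgamable i -> amalgamable (k ∘ i).
Proof.
  intros Hi B Cc a1 a2. destruct (Hi B Cc (a1 ∘ k) (a2 ∘ k)) as [D [b1 [b2 Hb]]].
  exists D, b1, b2. rewrite !comp_assoc in Hb |- *. exact Hb.
Qed.

Lemma amalgamation_base_retract (A B : Ob C) (h : Hom A B) (k : Hom B A) :
  k ∘ h = idm A -> amalgamation_base C B -> amalgamation_base C A.
Proof.
  intros Hkh HB. apply amalgamation_baseE in HB.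
  assert (Hk := amalgamable_comp_l _ _ _ (idm B) k HB). rewrite comp_id_r in Hk.
  apply amalgamation_baseE. rewrite <- Hkh. exact (amalgamable_comp_r _ _ _ h k Hk).
Qed.

End Amalgamation.

Section Transfer.
Variables C D : Category.
Variable F : Functor C D.

Definition absorbs_along (X' : Ob C) (X : Ob D) (e : Hom (fobj F X') X) : Prop :=
  forall (Y : Ob D) (f : Hom X Y),
    exists (Y' : Ob C) (f' : Hom X' Y') (g : Hom Y (fobj F Y')),
      fmap F f' = g ∘ f ∘ e.

Lemma absorbing_absorbs_along_id (X' : Ob C) :
  absorbing F -> absorbs_along X' (fobj F X') (idm _).
Proof.
  intros Ab Y f. destruct (Ab X' Y f) as [Y' [f' [g H]]].
  exists Y', f', g. rewrite comp_id_r. exact H.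
Qed.

Lemma absorbing_weakly_absorbing : absorbing F -> weakly_absorbing F.
Proof.
  intros Ab X'. exists (fobj F X'), (idm _). exact (absorbing_absorbs_along_id X' Ab).
Qed.

Lemma amalgamable_absorbed (A0 A : Ob C) (X : Ob D) (i : Hom A0 A)
    (e : Hom (fobj F A) X) :
  absorbs_along A X e -> amalgamable i -> amalgamable (e ∘ fmap F i).
Proof.
  intros He Hi B Cc a1 a2.
  destruct (He B a1) as [Y1 [f1 [g1 H1]]].
  destruct (He Cc a2) as [Y2 [f2 [g2 H2]]].
  destruct (Hi Y1 Y2 f1 f2) as [E [b1 [b2 Hb]]].
  exists (fobj F E), (fmap F b1 ∘ g1), (fmap F b2 ∘ g2).
  assert (HF := f_equal (fmap F) Hb).
  rewrite !fmap_comp, H1, H2, !comp_assoc in HF.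
  rewrite !comp_assoc. exact HF.
Qed.

Lemma amalgamation_base_fobj (A : Ob C) :
  absorbing F -> amalgamation_base C A -> amalgamation_base D (fobj F A).
Proof.
  intros Ab HA. apply amalgamation_baseE in HA.
  assert (H := amalgamable_absorbed A A _ (idm A) (idm _)
                 (absorbing_absorbs_along_id A Ab) HA).
  rewrite fmap_id, comp_id_l in H. apply amalgamation_baseE. exact H.
Qed.

Lemma AP_transfer : AP C -> essentially_wide F -> absorbing F -> AP D.
Proof.
  intros Ap Ew Ab A. destruct (Ew A) as [X' [h [k [Hkh _]]]].
  exact (amalgamation_base_retract D A _ h k Hkh (amalgamation_base_fobj X' Ab (Ap X'))).
Qed.

Lemma CAP_transfer : CAP C -> cofinal F -> absorbing F -> CAP D.
Proof.
  intros Cp Cf Ab A0. destruct (Cf A0) as [X' [u _]]. destruct (Cp X') as [A [i HA]].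
  exists (fobj F A), (fmap F i ∘ u). exact (amalgamation_base_fobj A Ab HA).
Qed.

Lemma WAP_transfer : WAP C -> cofinal F -> weakly_absorbing F -> WAP D.
Proof.
  intros Wp Cf Wa A0. destruct (Cf A0) as [X' [u _]].
  destruct (Wp X') as [A [i Hi]]. destruct (Wa A) as [X [e He]].
  exists X, (e ∘ fmap F i ∘ u).
  exact (amalgamable_comp_r D _ _ _ u _ (amalgamable_absorbed X' A X i e He Hi)).
Qed.

Lemma wide_essentially_wide : wide F -> essentially_wide F.
Proof.
  intros W X. destruct (W X) as [X' <-]. exists X', (idm _), (idm _).
  split; apply comp_id_l.
Qed.

Lemma wide_cofinal : wide F -> cofinal F.
Proof.
  intros W X. destruct (W X) as [X' <-]. exists X', (idm _). exact I.
Qed.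

Lemma star_surjective_absorbing : star_surjective F -> absorbing F.
Proof.
  intros S X' Y f. destruct (S X' Y f) as [Y' [f' [<- H]]].
  exists Y', f', (idm _). rewrite comp_id_l. exact H.
Qed.

End Transfer.

Theorem proposition3p7 (C D : Category) (F : Functor C D) :
  (AP C -> essentially_wide F -> absorbing F -> AP D) /\
  (CAP C -> cofinal F -> absorbing F -> CAP D) /\
  (WAP C -> cofinal F -> weakly_absorbing F -> WAP D) /\
  (wide F -> star_surjective F ->
     (AP C -> AP D) /\ (CAP C -> CAP D) /\ (WAP C -> WAP D)).
Proof.
  split; [exact (AP_transfer C D F) |].
  split; [exact (CAP_transfer C D F) |].
  split; [exact (WAP_transfer C D F) |].
  intros W S.
  assert (Ab := star_surjective_absorbing C D F S).
  split; [| split]; intros H.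
  - exact (AP_transfer C D F H (wide_essentially_wide C D F W) Ab).
  - exact (CAP_transfer C D F H (wide_cofinal C D F W) Ab).
  - exact (WAP_transfer C D F H (wide_cofinal C D F W)
             (absorbing_weakly_absorbing C D F Ab)).
Qed.
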